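(* For every integer $\kappa_c\ge0$, every agent $i$ and every softmax parameter $\theta$, $$\sup_{\overline Q_i^{\theta,\kappa_c}\in\mathcal Q_i^{\theta,\kappa_c}}\ \max_{s\in\mathcal S,\,a_i\in\mathcal A_i}\left|\overline Q_i^{\theta,\kappa_c}(s_{N_i^{\kappa_c}},a_i)-\overline Q_i^\theta(s,a_i)\right|\le\frac{2\min(\gamma^{\kappa_c-\kappa_r+1},1)}{1-\gamma}.$$
   Context: Networked Markov game. There are $n$ agents $\mathcal N=\{1,\dots,n\}$ placed at the nodes of an undirected graph $\mathcal G=(\mathcal N,\mathcal E)$ with graph distance $\mathrm{dist}$. For an integer $\kappa\ge0$, $N_i^\kappa=\{j\in\mathcal N:\mathrm{dist}(i,j)\le\kappa\}$ (so $i\in N_i^\kappa$), $\mathcal N_i=N_i^1$, $-N_i^\kappa=\mathcal N\setminus N_i^\kappa$, and $n(\kappa)=\max_i|N_i^\kappa|$. Agent $i$ has a finite local state space $\mathcal S_i$ and a finite local action space $\mathcal A_i$; $\mathcal S=\prod_i\mathcal S_i$, $\mathcal A=\prod_i\mathcal A_i$, and for $I\subseteq\mathcal N$ we write $s_I,a_I,\mathcal S_I,\mathcal A_I$ for the joint states/actions/spaces of the agents in $I$ (the subscript $-i$ means $\mathcal N\setminus\{i\}$). The dynamics are $\mathcal P(s'\mid s,a)=\prod_i\mathcal P_i(s_i'\mid s_{\mathcal N_i},a_i)$, the initial distribution is $\mu\in\Delta(\mathcal S)$, and $\gamma\in(0,1)$ is a discount factor. Each agent has a reward $r_i:\mathcal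 S\times\mathcal A\to[0,1]$ depending only on $(s_{N_i^{\kappa_r}},a_{N_i^{\kappa_r}})$ for a fixed integer $\kappa_r\ge0$. A local policy of agent $i$ is a map $\xi_i:\mathcal S_i\to\Delta(\mathcal A_i)$; $\Xi_i$ is the set of them, $\Xi_I=\prod_{i\in I}\Xi_i$, $\Xi=\Xi_{\mathcal N}$, and a joint policy $\xi=(\xi_1,\dots,\xi_n)$ acts by $\xi(a\mid s)=\prod_i\xi_i(a_i\mid s_i)$. For $\xi\in\Xi$: $Q_i^\xi(s,a)=\sum_{t\ge0}\gamma^t\mathbb E_\xi[r_i(s(t),a(t))\mid s(0)=s,a(0)=a]$; $\overline Q_i^\xi(s,a_i)=\mathbb E_{a_{-i}\sim\xi_{-i}(\cdot\mid s_{-i})}Q_i^\xi(s,a_i,a_{-i})$. Softmax policies: for $\theta_i\in\mathbb R^{|\mathcal S_i||\mathcal A_i|}$, $\xi_i^{\theta_i}(a_i\mid s_i)=\exp(\theta_{i,s_i,a_i})/\sum_{a_i'\in\mathcal A_i}\exp(\theta_{i,s_i,a_i'})$; $\xi^\theta=(\xi_1^{\theta_1},\dots,\xi_n^{\theta_n})$ and $\overline Q_i^\theta:=\overline Q_i^{\xi^\theta}$. Truncated averaged $Q$-functions: $\mathcal Q_i^{\theta,\kappa_c}$ is the set of all functions $\overline Q_i^{\theta,\kappa_c}:\mathcal S_{N_i^{\kappa_c}}\times\mathcal A_i\to\mathbb R$ for which there is a distribution $u_i\in\Delta(\mathcal S_{-N_i^{\kappa_c}})$ with $\overline Q_i^{\theta,\kappa_c}(s_{N_i^{\kappa_c}},a_i)=\mathbb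 E_{s_{-N_i^{\kappa_c}}\sim u_i}[\overline Q_i^\theta(s_{N_i^{\kappa_c}},s_{-N_i^{\kappa_c}},a_i)]$ for all $(s_{N_i^{\kappa_c}},a_i)$. *)

From HB Require Import structures.
From mathcomp Require Import all_boot all_order all_algebra.
From mathcomp Require Import all_classical all_reals all_analysis.
Unset Printing Implicit Defensive.
Import Order.TTheory GRing.Theory Num.Theory.
Local Open Scope ring_scope.

Section NetMG.
Variables (R : realType) (n : nat).
Variable (S A : 'I_n -> finType).

Definition JS := {dffun forall i : 'I_n, S i}.
Definition JA := {dffun forall i : 'I_n, A i}.

Fixpoint nbhd (e : rel 'I_n) (k : nat) (i : 'I_n) : {set 'I_n} :=
  match k with
  | 0 => [set i]
  | k'.+1 => nbhd e k' i :|: [set j | [exists l in nbhd e k' i, e l j]]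
  end.

Definition jpol (xi : forall i, S i -> A i -> R) (s : JS) (a : JA) : R :=
  \prod_(i < n) xi i (s i) (a i).

Definition jtrans (P : forall i, JS -> A i -> S i -> R) (s : JS) (a : JA) (s' : JS) : R :=
  \prod_(i < n) P i s (a i) (s' i).

(* occ t s0 a0 s a = Pr_xi[ s(t) = s, a(t) = a | s(0) = s0, a(0) = a0 ] *)
Fixpoint occ (P : forall i, JS -> A i -> S i -> R) (xi : forall i, S i -> A i -> R)
    (s0 : JS) (a0 : JA) (t : nat) : JS -> JA -> R :=
  match t with
  | 0 => fun s a => ((s == s0) && (a == a0))%:R
  | t'.+1 => fun s' a' =>
      \sum_(s : JS) \sum_(a : JA)
        occ P xi s0 a0 t' s a * jtrans P s a s' * jpol xi s' a'
  end.

Definition Qfun (gamma : R) (P : forall i, JS -> A i -> S i -> R)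
    (xi : forall i, S i -> A i -> R) (r : JS -> JA -> R) (s : JS) (a : JA) : R :=
  limn (fun N : nat => \sum_(0 <= t < N)
     (gamma ^+ t * \sum_(s' : JS) \sum_(a' : JA) occ P xi s a t s' a' * r s' a')).

Definition Qbar (gamma : R) (P : forall i, JS -> A i -> S i -> R)
    (xi : forall i, S i -> A i -> R) (r : JS -> JA -> R) (i : 'I_n)
    (s : JS) (ai : A i) : R :=
  \sum_(a : JA | a i == ai)
     (\prod_(j < n | j != i) xi j (s j) (a j)) * Qfun gamma P xi r s a.

Definition softmax (theta : forall i, S i -> A i -> R) (i : 'I_n) (si : S i) (ai : A i) : R :=
  expR (theta i si ai) / \sum_(b : A i) expR (theta i si b).

Definition glue (I : {set 'I_n}) (s s' : JS) : JS :=
  [ffun j => if j \in I then s j else s' j].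

(* Q_i^{theta,kc}: functions Qt of (s_{N_i^kc}, a_i), represented as functions
   of the full state s depending on s only through s_{N}, of the form
   Qt(s_N,a_i) = E_{s'_{-N} ~ u} Qbar(s_N, s'_{-N}, a_i) for a distribution u
   (a distribution on S_{-N} is represented by a distribution on JS whose
   marginal on the coordinates outside N is the distribution of interest). *)
Definition Qtrunc_set (gamma : R) (P : forall i, JS -> A i -> S i -> R)
    (theta : forall i, S i -> A i -> R) (r : JS -> JA -> R) (e : rel 'I_n)
    (kc : nat) (i : 'I_n) (Qt : JS -> A i -> R) : Prop :=
  exists u : JS -> R,
    (forall s, 0 <= u s) /\ \sum_(s : JS) u s = 1 /\
    forall (s : JS) (ai : A i),
      Qt s ai = \sum_(s' : JS) u s' *
                 Qbar gamma P (softmax theta) r i (glue (nbhd e kc i) s s') ai.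

End NetMG.

Arguments JS {n} S.
Arguments JA {n} A.
Arguments nbhd {n} e k i.
Arguments jpol {R n S A} xi s a.
Arguments jtrans {R n S A} P s a s'.
Arguments occ {R n S A} P xi s0 a0 t.
Arguments Qfun {R n S A} gamma P xi r s a.
Arguments Qbar {R n S A} gamma P xi r i s ai.
Arguments softmax {R n S A} theta i si ai.
Arguments glue {n S} I s s'.
Arguments Qtrunc_set {R n S A} gamma P theta r e kc i Qt.

(* Fix agent i and a joint policy xi.  Write c_t(s,a) for the expected reward
   r_i at time t of the state-action chain started at (s,a), and Ebar_t(s,a_i)
   for its average over a_{-i} ~ xi_{-i}(.|s_{-i}); then
   Qbar(s,a_i) = sum_t gamma^t Ebar_t(s,a_i) with every term in [0,1].
   Since r_i depends only on N_i^kr and the transition of agent j only on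
   N_j^1, c_t is the t-th iterate of the chain's transition operator applied
   to r_i and depends only on N_i^(kr+t); by marginalising the product weights,
   so does Ebar_t.  Hence two states agreeing on N_i^kc share all terms with
   t + kr <= kc, and their Q-values differ by at most the geometric tail
   gamma^(kc+1-kr) / (1 - gamma).  A truncated Q-function averages Qbar over
   states agreeing with s on N_i^kc, so it inherits this bound, which lies
   below the stated 2 min(gamma^(kc-kr+1), 1) / (1 - gamma). *)

From Pilot Require Import Defs.
From HB Require Import structures.
From mathcomp Require Import all_boot all_order all_algebra.
From mathcomp Require Import all_classical all_reals all_analysis.
From mathcomp Require Import ring lra zify.
Import Order.TTheory GRing.Theory Num.Theory.
Import numFieldNormedType.Exports.
Local Open Scope ring_scope.

Section ProductSums.
Variables (R : realType) (n : nat) (T : 'I_n -> finType).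
Local Notation JT := {dffun forall j : 'I_n, T j}.

Definition upd (s : JT) (m : 'I_n) (y : T m) : JT :=
  @finfun _ T (fun j => @dfwith _ T (fun j => s j) m y j).

Lemma upd_in s m y : upd s m y m = y.
Proof. by rewrite ffunE; exact: dfwith_in. Qed.

Lemma upd_out s m y j : m != j -> upd s m y j = s j.
Proof. by move=> mj; rewrite ffunE; exact: dfwith_out. Qed.

Lemma updK s m y : upd (upd s m y) m (s m) = s.
Proof.
apply/ffunP => j; have [<-|mj] := eqVneq m j; first by rewrite upd_in.
by rewrite !upd_out.
Qed.

Lemma sum_indicator (U : finType) (x0 : U) (g : U -> R) :
  \sum_(x : U) (x == x0)%:R * g x = g x0.
Proof.
rewrite (bigD1 x0) //= eqxx mul1r big1 ?addr0 // => x /negbTE ->.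
by rewrite mul0r.
Qed.

(* Counting each profile [#|T m|] times and reindexing by the involution
   (s, y) |-> (upd s m y, s m) separates the [m]-th coordinate from a weight
   [phi] that ignores it. *)
Lemma card_mul_sum_coord m (phi : JT -> R) (F : T m -> R) :
  (forall s y, phi (upd s m y) = phi s) ->
  #|T m|%:R * \sum_(s : JT) phi s * F (s m) =
  (\sum_(s : JT) phi s) * \sum_(y : T m) F y.
Proof.
move=> phi_upd.
have -> : #|T m|%:R * \sum_(s : JT) phi s * F (s m) =
    \sum_(p : JT * T m) phi p.1 * F (p.1 m).
  rewrite -[RHS](pair_bigA _ (fun s (y : T m) => phi s * F (s m))) /= mulr_sumr.
  by apply: eq_bigr => s _; rewrite sumr_const mulr_natl.
pose swap (p : JT * T m) := (upd p.1 m p.2, p.1 m).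
have swapK : involutive swap by move=> [s y]; rewrite /swap /= updK upd_in.
rewrite (reindex_inj (inv_inj swapK)) /=.
rewrite -(pair_bigA _ (fun s (y : T m) => phi (upd s m y) * F (upd s m y m))) /=.
rewrite mulr_suml.
apply: eq_bigr => s _; rewrite mulr_sumr; apply: eq_bigr => y _.
by rewrite phi_upd upd_in.
Qed.

Lemma sum_coord_congr m (phi : JT -> R) (F G : T m -> R) :
  (forall s y, phi (upd s m y) = phi s) ->
  \sum_(y : T m) F y = \sum_(y : T m) G y ->
  \sum_(s : JT) phi s * F (s m) = \sum_(s : JT) phi s * G (s m).
Proof.
move=> phi_upd sumFG; have [Tm0|Tm_gt0] := eqVneq #|T m| 0%N.
  by rewrite !big1 // => s; have := card0_eq Tm0 (s m); rewrite inE.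
apply: (mulfI (x := #|T m|%:R)); first by rewrite pnatr_eq0.
by rewrite !card_mul_sum_coord // sumFG.
Qed.

Lemma sum_prod_congr (K : {set 'I_n}) (F G : forall j, T j -> R) (h : JT -> R) :
  (forall j, j \in K -> forall x, F j x = G j x) ->
  (forall j, j \notin K -> \sum_x F j x = \sum_x G j x) ->
  (forall s s' : JT, (forall j, j \in K -> s j = s' j) -> h s = h s') ->
  \sum_(s : JT) (\prod_j F j (s j)) * h s =
  \sum_(s : JT) (\prod_j G j (s j)) * h s.
Proof.
move=> FG_K FG_notK h_loc.
pose mix k (s : JT) :=
  \prod_j (if (nat_of_ord j < k)%N then G j (s j) else F j (s j)).
have mix_step k (lt_kn : (k < n)%N) :
    \sum_(s : JT) mix k s * h s = \sum_(s : JT) mix k.+1 s * h s.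
  pose m := Ordinal lt_kn.
  pose rest (s : JT) := \prod_(j | j != m)
      (if (nat_of_ord j < k)%N then G j (s j) else F j (s j)) * h s.
  have mixF s : mix k s * h s = rest s * F m (s m).
    by rewrite /mix (bigD1 m) //= ltnn -mulrA mulrC.
  have mixG s : mix k.+1 s * h s = rest s * G m (s m).
    rewrite /mix (bigD1 m) //= ltnSn -mulrA mulrC /rest; congr (_ * _ * _).
    apply: eq_bigr => j jm; rewrite ltnS leq_eqVlt.
    suff /negbTE-> : nat_of_ord j != k by [].
    by apply: contra jm => /eqP jk; apply/eqP/val_inj.
  under eq_bigr do rewrite mixF; under [RHS]eq_bigr do rewrite mixG.
  have [mK|mNK] := boolP (m \in K).
    by apply: eq_bigr => s _; rewrite FG_K.
  apply: sum_coord_congr (FG_notK m mNK) => s y; congr (_ * _).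
    by apply: eq_bigr => j jm; rewrite upd_out // eq_sym.
  apply: h_loc => j jK; apply: upd_out.
  by apply: contraNneq mNK => ->.
have mix_all k : (k <= n)%N ->
    \sum_(s : JT) mix 0%N s * h s = \sum_(s : JT) mix k s * h s.
  by elim: k => [//|k IH] lt_kn; rewrite IH ?(ltnW lt_kn) // mix_step.
transitivity (\sum_(s : JT) mix 0%N s * h s).
  by apply: eq_bigr => s _; congr (_ * _); apply: eq_bigr.
rewrite (mix_all n (leqnn n)); apply: eq_bigr => s _; congr (_ * _).
by apply: eq_bigr => j _; rewrite ltn_ord.
Qed.

Lemma sum_prod_eq1 (s0 : JT) (F : forall j, T j -> R) :
  (forall j, \sum_x F j x = 1) -> \sum_(s : JT) \prod_j F j (s j) = 1.
Proof.
move=> F_sum1.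
have point_mass (s : JT) : \prod_j ((s j == s0 j)%:R : R) = (s == s0)%:R.
  have [->|s_s0] := eqVneq s s0; first by rewrite big1 // => j _; rewrite eqxx.
  have [j /negbTE sj] : exists j, s j != s0 j.
    apply/existsP; apply: contraR s_s0 => /existsPn s_eq.
    by apply/eqP/ffunP => j; apply/eqP; rewrite -[_ == _]negbK s_eq.
  by rewrite (bigD1 j) //= sj mul0r.
transitivity (\sum_(s : JT) (\prod_j F j (s j)) * 1).
  by apply: eq_bigr => s _; rewrite mulr1.
rewrite (@sum_prod_congr finset.set0 F (fun j x => (x == s0 j)%:R)) => [|j|j _|//].
- by under eq_bigr do rewrite point_mass; rewrite sum_indicator.
- by rewrite inE.
- by under [RHS]eq_bigr do rewrite -[_%:R]mulr1; rewrite F_sum1 sum_indicator.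
Qed.

End ProductSums.
Arguments upd {n T} s m y.

Section Neighbourhoods.
Context {n : nat}.
Variable e : rel 'I_n.

Lemma nbhd_subS k i j : j \in nbhd e k i -> j \in nbhd e k.+1 i.
Proof. by move=> jNk /=; rewrite inE jNk. Qed.

Lemma nbhd_step k i j l : j \in nbhd e k i -> l \in nbhd e 1 j -> l \in nbhd e k.+1 i.
Proof.
move=> jNk /=; rewrite !inE => /orP[/eqP ->|]; first by rewrite jNk.
case/existsP => x /andP[]; rewrite inE => /eqP-> ejl.
by apply/orP; right; apply/existsP; exists j; rewrite jNk.
Qed.

Lemma nbhd_mono k k' i j : (k <= k')%N -> j \in nbhd e k i -> j \in nbhd e k' i.
Proof.
elim: k' => [|k' IH]; first by rewrite leqn0 => /eqP ->.
by rewrite leq_eqVlt => /orP[/eqP -> //|/IH jNk /jNk /nbhd_subS].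
Qed.

End Neighbourhoods.

Section StateActionChain.
Context {R : realType} {n : nat} {S A : 'I_n -> finType}.
Context {P : forall i : 'I_n, JS S -> A i -> S i -> R}.
Context {xi : forall i : 'I_n, S i -> A i -> R}.

Definition chainop (f : JS S -> JA A -> R) (s : JS S) (a : JA A) : R :=
  \sum_(s' : JS S) \sum_(a' : JA A) jtrans P s a s' * jpol xi s' a' * f s' a'.

Lemma occ_sum_iter t f s0 a0 :
  \sum_(s : JS S) \sum_(a : JA A) occ P xi s0 a0 t s a * f s a =
  iter t chainop f s0 a0.
Proof.
elim: t f => [|t IH] f /=.
  have split_indicator s a : ((s == s0) && (a == a0))%:R * f s a =
      (s == s0)%:R * ((a == a0)%:R * f s a) :> R.
    by rewrite mulrA -natrM mulnb.
  under eq_bigr do under eq_bigr do rewrite split_indicator.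
  by under eq_bigr do rewrite -mulr_sumr sum_indicator; rewrite sum_indicator.
rewrite -iterS iterSr -IH.
transitivity (\sum_(s' : JS S) \sum_(a' : JA A) \sum_(s : JS S) \sum_(a : JA A)
   occ P xi s0 a0 t s a * (jtrans P s a s' * jpol xi s' a' * f s' a')).
  apply: eq_bigr => s' _; apply: eq_bigr => a' _.
  rewrite mulr_suml; apply: eq_bigr => s _; rewrite mulr_suml.
  by apply: eq_bigr => a _; rewrite !mulrA.
under eq_bigr do rewrite exchange_big /=.
rewrite [LHS]exchange_big /=; apply: eq_bigr => s _.
under eq_bigr do rewrite exchange_big /=.
rewrite [LHS]exchange_big /=; apply: eq_bigr => a _.
by rewrite /chainop mulr_sumr; apply: eq_bigr => s' _; rewrite mulr_sumr.
Qed.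

Hypothesis P_ge0 : forall i s ai si, 0 <= P i s ai si.
Hypothesis P_sum1 : forall i s ai, \sum_(si : S i) P i s ai si = 1.
Hypothesis xi_ge0 : forall i si ai, 0 <= xi i si ai.
Hypothesis xi_sum1 : forall i si, \sum_(ai : A i) xi i si ai = 1.

Lemma chainop_weight_ge0 s a s' a' : 0 <= jtrans P s a s' * jpol xi s' a'.
Proof. by rewrite mulr_ge0 ?prodr_ge0. Qed.

Lemma chainop1 s a : chainop (fun _ _ => 1) s a = 1.
Proof.
rewrite /chainop; under eq_bigr do under eq_bigr do rewrite mulr1.
under eq_bigr => s' _ do
  rewrite -mulr_sumr (@sum_prod_eq1 R n A a (fun j => xi j (s' j))) // mulr1.
exact: (@sum_prod_eq1 R n S s (fun j => P j s (a j))).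
Qed.

Lemma chainop_bnd f : (forall s a, 0 <= f s a <= 1) ->
  forall s a, 0 <= chainop f s a <= 1.
Proof.
move=> f01 s a; apply/andP; split.
  apply: sumr_ge0 => s' _; apply: sumr_ge0 => a' _.
  by rewrite mulr_ge0 ?chainop_weight_ge0 //; case/andP: (f01 s' a').
rewrite -(chainop1 s a); apply: ler_sum => s' _; apply: ler_sum => a' _.
by rewrite ler_wpM2l ?chainop_weight_ge0 //; case/andP: (f01 s' a').
Qed.

Lemma iter_chainop_bnd t f : (forall s a, 0 <= f s a <= 1) ->
  forall s a, 0 <= iter t chainop f s a <= 1.
Proof. by move=> f01; elim: t => [//|t IH]; apply: chainop_bnd. Qed.

Definition local (K : {set 'I_n}) (f : JS S -> JA A -> R) :=
  forall (s s' : JS S) (a a' : JA A),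
    (forall j, j \in K -> s j = s' j /\ a j = a' j) -> f s a = f s' a'.

Context {e : rel 'I_n}.
Hypothesis P_local : forall i (s s' : JS S) ai,
  (forall j, j \in nbhd e 1 i -> s j = s' j) ->
  forall si, P i s ai si = P i s' ai si.

(* One transition enlarges the dependence set [K] by its graph neighbours:
   the next local states in [K] only look at their 1-neighbourhoods, and the
   other factors of [P] and of [xi] integrate to one. *)
Lemma chainop_local (K K' : {set 'I_n}) f : {subset K <= K'} ->
  (forall j l, j \in K -> l \in nbhd e 1 j -> l \in K') ->
  local K f -> local K' (chainop f).
Proof.
move=> KK' K'_nbhd f_loc s s2 a a2 ss2.
pose g (s' : JS S) := \sum_(a' : JA A) jpol xi s' a' * f s' a'.
have chainopE s0 a0 : chainop f s0 a0 = \sum_(s' : JS S) jtrans P s0 a0 s' * g s'.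
  apply: eq_bigr => s' _; rewrite mulr_sumr; apply: eq_bigr => a' _.
  by rewrite mulrA.
have g_loc (s' s'' : JS S) : (forall j, j \in K -> s' j = s'' j) -> g s' = g s''.
  move=> s's''; rewrite /g.
  transitivity (\sum_(a' : JA A) jpol xi s' a' * f s'' a').
    by apply: eq_bigr => a' _; congr (_ * _); apply: f_loc => j /s's''.
  apply: (@sum_prod_congr R n A K (fun j => xi j (s' j)) (fun j => xi j (s'' j)))
    => [j /s's'' -> //|j _|b b' bb'].
    by rewrite !xi_sum1.
  by apply: f_loc => j jK; rewrite (bb' j jK).
rewrite !chainopE.
apply: (@sum_prod_congr R n S K (fun j => P j s (a j)) (fun j => P j s2 (a2 j)))
  => [j jK x|j _|]; last exact: g_loc.
- have [_ <-] := ss2 j (KK' j jK).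
  by apply: P_local => l lj; have [] := ss2 l (K'_nbhd j l jK lj).
- by rewrite !P_sum1.
Qed.

Lemma iter_chainop_local i t k f :
  local (nbhd e k i) f -> local (nbhd e (k + t) i) (iter t chainop f).
Proof.
elim: t k f => [|t IH] k f f_loc; first by rewrite addn0.
rewrite iterSr -addSnnS; apply: IH.
by apply: chainop_local f_loc; [exact: nbhd_subS | exact: nbhd_step].
Qed.

End StateActionChain.
Arguments chainop {R n S A} P xi f s a.

Section GeometricTail.
Context {R : realType}.

Lemma geometric_tail_sum (g : R) k N :
  (1 - g) * \sum_(0 <= t < N) g ^+ t * (k <= t)%N%:R + g ^+ (maxn N k) = g ^+ k.
Proof.
elim: N => [|N IH]; first by rewrite big_nil mulr0 add0r max0n.
rewrite big_nat_recr //= mulrDr; have [kN|Nk] := leqP k N.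
  rewrite (maxn_idPl (leqW kN)); move: IH; rewrite (maxn_idPl kN) mulr1 exprS.
  by move=> <-; ring.
rewrite (maxn_idPr Nk); move: IH; rewrite (maxn_idPr (ltnW Nk)).
by rewrite mulr0 mulr0 addr0.
Qed.

Lemma geometric_tail_le (g : R) k N : 0 <= g < 1 ->
  \sum_(0 <= t < N) g ^+ t * (k <= t)%N%:R <= g ^+ k / (1 - g).
Proof.
case/andP => g_ge0 g_lt1.
rewrite ler_pdivlMr ?subr_gt0 // mulrC -(geometric_tail_sum g k N) lerDl.
exact: exprn_ge0.
Qed.

End GeometricTail.

Section LocalityOfQbar.
Local Open Scope classical_set_scope.
Local Open Scope ring_scope.
Context {R : realType} {n : nat} {S A : 'I_n -> finType} {e : rel 'I_n}.
Context {P : forall i : 'I_n, JS S -> A i -> S i -> R}.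
Hypothesis P_ge0 : forall i s ai si, 0 <= P i s ai si.
Hypothesis P_sum1 : forall i s ai, \sum_(si : S i) P i s ai si = 1.
Hypothesis P_local : forall i (s s' : JS S) ai,
  (forall j, j \in nbhd e 1 i -> s j = s' j) ->
  forall si, P i s ai si = P i s' ai si.
Context {xi : forall i : 'I_n, S i -> A i -> R}.
Hypothesis xi_ge0 : forall i si ai, 0 <= xi i si ai.
Hypothesis xi_sum1 : forall i si, \sum_(ai : A i) xi i si ai = 1.
Context {gamma : R}.
Hypothesis gamma01 : 0 < gamma < 1.
Context {kr : nat} {i : 'I_n} {r : JS S -> JA A -> R}.
Hypothesis r01 : forall s a, 0 <= r s a <= 1.
Hypothesis r_local : local (nbhd e kr i) r.
(* some joint action, used to build point masses on [A i] *)
Variable a0 : JA A.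

Let gamma_ge0 : 0 <= gamma. Proof. by case/andP: gamma01 => /ltW. Qed.
Let gamma_ge0_lt1 : 0 <= gamma < 1. Proof. by rewrite gamma_ge0; case/andP: gamma01. Qed.

Let reward_at t := iter t (chainop P xi) r.

Let others_weight (s : JS S) (a : JA A) := \prod_(j < n | j != i) xi j (s j) (a j).

Let avg_reward_at t s (ai : A i) :=
  \sum_(a : JA A | a i == ai) others_weight s a * reward_at t s a.

Lemma reward_at_bnd t s a : 0 <= reward_at t s a <= 1.
Proof. exact: iter_chainop_bnd. Qed.

(* [Qfun] is the sum of the discounted expected rewards; the partial sums
   converge, being nondecreasing and bounded by [1 / (1 - gamma)]. *)
Lemma Qfun_series_cvg s a :
  (fun N => \sum_(0 <= t < N) gamma ^+ t * reward_at t s a) @ \oo -->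
  Qfun gamma P xi r s a.
Proof.
pose u N := \sum_(0 <= t < N) gamma ^+ t * reward_at t s a.
have -> : Qfun gamma P xi r s a = limn u.
  rewrite /Qfun; congr (lim (_ @ \oo)); apply/funext => N.
  by apply: eq_bigr => t _; rewrite occ_sum_iter.
have term_ge0 t : 0 <= gamma ^+ t * reward_at t s a.
  by rewrite mulr_ge0 ?exprn_ge0 //; case/andP: (reward_at_bnd t s a).
apply: nondecreasing_is_cvgn.
  by move=> m k mk; rewrite /u (big_cat_nat (leq0n m) mk) /= lerDl sumr_ge0.
exists (gamma ^+ 0 / (1 - gamma)) => _ [N _ <-].
apply: (le_trans _ (geometric_tail_le gamma 0 N gamma_ge0_lt1)); apply: ler_sum => t _.
by rewrite leq0n mulr1 ler_piMr ?exprn_ge0 //; case/andP: (reward_at_bnd t s a).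
Qed.

Lemma Qbar_series_cvg s ai :
  (fun N => \sum_(0 <= t < N) gamma ^+ t * avg_reward_at t s ai) @ \oo -->
  Qbar gamma P xi r i s ai.
Proof.
have -> : (fun N => \sum_(0 <= t < N) gamma ^+ t * avg_reward_at t s ai) =
    (fun N => \sum_(a : JA A | a i == ai) others_weight s a *
       \sum_(0 <= t < N) gamma ^+ t * reward_at t s a).
  apply/funext => N; under [RHS]eq_bigr do rewrite mulr_sumr.
  rewrite exchange_big /=; apply: eq_bigr => t _; rewrite mulr_sumr.
  by apply: eq_bigr => a _; rewrite mulrCA.
apply: cvg_big => //; first exact: add_continuous.
by move=> a _; apply: cvgMl_tmp; exact: Qfun_series_cvg.
Qed.

Let pinned_policy (s : JS S) (ai : A i) (j : 'I_n) (b : A j) : R :=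
  if j == i then (b == upd a0 i ai j)%:R else xi j (s j) b.

Lemma pinned_policy_ge0 s ai j b : 0 <= pinned_policy s ai j b.
Proof. by rewrite /pinned_policy; case: (j == i). Qed.

Lemma pinned_policy_sum1 s ai j : \sum_b pinned_policy s ai j b = 1.
Proof.
rewrite /pinned_policy; case: (j == i); last exact: xi_sum1.
by under eq_bigr do rewrite -[_%:R]mulr1; rewrite sum_indicator.
Qed.

Lemma avg_prodE (g : JA A -> R) s ai :
  \sum_(a : JA A | a i == ai) others_weight s a * g a =
  \sum_(a : JA A) (\prod_j pinned_policy s ai j (a j)) * g a.
Proof.
rewrite big_mkcond /=; apply: eq_bigr => a _.
rewrite (bigD1 i) //= {1}/pinned_policy eqxx upd_in.
have -> : \prod_(j < n | j != i) pinned_policy s ai j (a j) = others_weight s a.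
  by apply: eq_bigr => j /negbTE ji; rewrite /pinned_policy ji.
by case: (a i == ai); rewrite ?mul1r ?mul0r.
Qed.

Lemma avg_reward_bnd t s ai : 0 <= avg_reward_at t s ai <= 1.
Proof.
have weight_ge0 a : 0 <= \prod_j pinned_policy s ai j (a j).
  by apply: prodr_ge0 => j _; exact: pinned_policy_ge0.
rewrite /avg_reward_at avg_prodE; apply/andP; split.
  apply: sumr_ge0 => a _; rewrite mulr_ge0 //.
  by case/andP: (reward_at_bnd t s a).
rewrite -[leRHS](@sum_prod_eq1 R n A a0 (pinned_policy s ai)); last first.
  exact: pinned_policy_sum1.
apply: ler_sum => a _; rewrite ler_piMr //.
by case/andP: (reward_at_bnd t s a).
Qed.

Variable kc : nat.

Lemma avg_reward_local t (s1 s2 : JS S) ai : (t + kr <= kc)%N ->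
  (forall j, j \in nbhd e kc i -> s1 j = s2 j) ->
  avg_reward_at t s1 ai = avg_reward_at t s2 ai.
Proof.
move=> t_kr_kc s12.
have reward_loc : local (nbhd e kc i) (reward_at t).
  move=> s s' a a' ss'.
  apply: (iter_chainop_local P_sum1 xi_sum1 P_local _ t _ _ r_local) => j j_in.
  by apply: ss'; apply: (nbhd_mono e (kr + t) kc i j _ j_in); rewrite addnC.
rewrite /avg_reward_at !avg_prodE.
transitivity (\sum_(a : JA A) (\prod_j pinned_policy s1 ai j (a j)) * reward_at t s2 a).
  by apply: eq_bigr => a _; congr (_ * _); apply: reward_loc => j /s12.
apply: sum_prod_congr => [j /s12 sj b|j _|b b' bb'].
- by rewrite /pinned_policy sj.
- by rewrite !pinned_policy_sum1.
- by apply: reward_loc => j /bb'.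
Qed.

Lemma Qbar_local_diff (s1 s2 : JS S) ai :
  (forall j, j \in nbhd e kc i -> s1 j = s2 j) ->
  `| Qbar gamma P xi r i s1 ai - Qbar gamma P xi r i s2 ai |
     <= gamma ^+ (kc.+1 - kr) / (1 - gamma).
Proof.
move=> s12.
apply: (cvgr_to_le (cvg_norm (cvgB (Qbar_series_cvg s1 ai) (Qbar_series_cvg s2 ai)))).
apply: nearW => N /=; rewrite !fctE -sumrB.
apply: le_trans (ler_norm_sum _ _ _) _.
apply: (le_trans _ (geometric_tail_le gamma _ N gamma_ge0_lt1)); apply: ler_sum => t _.
rewrite -mulrBr normrM ger0_norm ?exprn_ge0 // ler_wpM2l ?exprn_ge0 //.
have [tail|head] := leqP (kc.+1 - kr) t.
  have /andP[r1_ge0 r1_le1] := avg_reward_bnd t s1 ai.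
  have /andP[r2_ge0 r2_le1] := avg_reward_bnd t s2 ai.
  by rewrite (_ : true%:R = 1) // ler_norml; apply/andP; split; lra.
by rewrite (avg_reward_local t s1 s2 ai _ s12) ?subrr ?normr0 //; lia.
Qed.

End LocalityOfQbar.

Section Softmax.
Context {R : realType} {n : nat} {S A : 'I_n -> finType}.
Variable theta : forall j : 'I_n, S j -> A j -> R.

Lemma softmax_ge0 j x b : 0 <= softmax theta j x b.
Proof. by rewrite divr_ge0 ?expR_ge0 ?sumr_ge0 // => b' _; exact: expR_ge0. Qed.

Lemma softmax_sum1 (a0 : JA A) j x : \sum_b softmax theta j x b = 1.
Proof.
have sum_gt0 : 0 < \sum_b expR (theta j x b).
  apply: (lt_le_trans (expR_gt0 (theta j x (a0 j)))).
  by rewrite (bigD1 (a0 j)) //= lerDl sumr_ge0 // => b _; exact: expR_ge0.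
by rewrite /softmax -mulr_suml divff // gt_eqF.
Qed.

End Softmax.

Lemma convex_comb_dist_le {R : realType} {I : finType} (u f : I -> R) (c B : R) :
  (forall x, 0 <= u x) -> \sum_x u x = 1 -> (forall x, `|f x - c| <= B) ->
  `|\sum_x u x * f x - c| <= B.
Proof.
move=> u_ge0 u_sum1 f_near.
have -> : \sum_x u x * f x - c = \sum_x u x * (f x - c).
  by under [RHS]eq_bigr do rewrite mulrBr; rewrite sumrB -mulr_suml u_sum1 mul1r.
apply: le_trans (ler_norm_sum _ _ _) _.
rewrite -[leRHS]mul1r -u_sum1 mulr_suml; apply: ler_sum => x _.
by rewrite normrM ger0_norm // ler_wpM2l.
Qed.

(* The discounted tail [gamma^(kc+1-kr)] (a natural power, truncated at 0)
   is below [min(gamma^(kc-kr+1), 1)] (an integer power). *)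
Lemma tail_exp_le_min {R : realType} (gamma : R) (kc kr : nat) : 0 < gamma <= 1 ->
  gamma ^+ (kc.+1 - kr) <= Num.min (gamma ^ (kc%:Z - kr%:Z + 1)) 1.
Proof.
case/andP => gamma_gt0 gamma_le1; rewrite le_min; apply/andP; split; last first.
  by rewrite exprn_ile1 // ltW.
have [kr_le|kr_gt] := leqP kr kc.+1.
  by have -> : kc%:Z - kr%:Z + 1 = (kc.+1 - kr)%N%:Z by lia.
have -> : (kc.+1 - kr)%N = 0%N by lia.
have -> : kc%:Z - kr%:Z + 1 = - (kr - kc.+1)%N%:Z by lia.
by rewrite -exprnN expr0 invf_ge1 ?exprn_gt0 // exprn_ile1 // ltW.
Qed.

Lemma tail_bound_le {R : realType} (gamma : R) (kc kr : nat) : 0 < gamma < 1 ->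
  gamma ^+ (kc.+1 - kr) / (1 - gamma) <=
  2 * Num.min (gamma ^ (kc%:Z - kr%:Z + 1)) 1 / (1 - gamma).
Proof.
case/andP => gamma_gt0 gamma_lt1.
apply: ler_wpM2r; first by rewrite invr_ge0 subr_ge0 ltW.
have tail_ge0 : 0 <= gamma ^+ (kc.+1 - kr) by rewrite exprn_ge0 ?ltW.
have := tail_exp_le_min gamma kc kr; rewrite gamma_gt0 ltW // => /(_ isT).
lra.
Qed.

Theorem lemma1 (R : realType) (n : nat) (S A : 'I_n -> finType)
  (e : rel 'I_n) (he_sym : symmetric e) (he_irr : irreflexive e)
  (P : forall i : 'I_n, JS S -> A i -> S i -> R)
  (hP_ge0 : forall i s ai si, 0 <= P i s ai si)
  (hP_sum : forall i s ai, \sum_(si : S i) P i s ai si = 1)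
  (hP_loc : forall i (s s' : JS S) ai,
      (forall j, j \in nbhd e 1 i -> s j = s' j) ->
      forall si, P i s ai si = P i s' ai si)
  (gamma : R) (hgamma : 0 < gamma < 1)
  (kr : nat) (r : 'I_n -> JS S -> JA A -> R)
  (hr01 : forall i s a, 0 <= r i s a <= 1)
  (hr_loc : forall i (s s' : JS S) (a a' : JA A),
      (forall j, j \in nbhd e kr i -> s j = s' j /\ a j = a' j) ->
      r i s a = r i s' a')
  (kc : nat) (i : 'I_n) (theta : forall j : 'I_n, S j -> A j -> R)
  (Qt : JS S -> A i -> R) :
  Qtrunc_set gamma P theta (r i) e kc i Qt ->
  forall (s : JS S) (ai : A i),
    `| Qt s ai - Qbar gamma P (softmax theta) (r i) i s ai |
      <= 2 * Num.min (gamma ^ (kc%:Z - kr%:Z + 1)) 1 / (1 - gamma).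
Proof.
move=> [u [u_ge0 [u_sum1 Qt_avg]]] s ai.
rewrite Qt_avg; apply: convex_comb_dist_le => // s'.
apply: (le_trans _ (tail_bound_le gamma kc kr hgamma)).
have glue_eq j : j \in nbhd e kc i -> Defs.glue (nbhd e kc i) s s' j = s j.
  by move=> j_in; rewrite ffunE j_in.
have [a0 _|no_action] := pickP (fun _ : JA A => true).
  exact: (Qbar_local_diff hP_ge0 hP_sum hP_loc (softmax_ge0 theta)
    (softmax_sum1 theta a0) hgamma (hr01 i) (hr_loc i) a0 kc _ _ ai glue_eq).
(* without joint actions, [Qbar] is an empty sum *)
have Qbar0 s'' : Qbar gamma P (softmax theta) (r i) i s'' ai = 0.
  by rewrite /Qbar big_pred0 // => a; have := no_action a.
have [gamma_gt0 gamma_lt1] := andP hgamma.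
by rewrite !Qbar0 subrr normr0 divr_ge0 ?exprn_ge0 ?subr_ge0 ?ltW.
Qed.
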